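(* Let $G$ be a finite bipartite graph. If $G$ has a nonempty channel, then the number $m_G$ of perfect matchings of $G$ is even.
   Context: A channel of a graph $G=(V,E)$ is a set $C\subseteq V$ such that every vertex of $G$ is adjacent to an even number of vertices of $C$. *)

From mathcomp Require Import all_boot.
Set Implicit Arguments. Unset Strict Implicit. Unset Printing Implicit Defensive.

Definition simple_graph (T : finType) (e : rel T) : Prop :=
  symmetric e /\ irreflexive e.

Definition bipartite (T : finType) (e : rel T) : Prop :=
  exists c : T -> bool, forall x y, e x y -> c x != c y.

Definition channel (T : finType) (e : rel T) (C : {set T}) : Prop :=
  forall v : T, ~~ odd #|[set u in C | e v u]|.

Definition is_edge (T : finType) (e : rel T) (S : {set T}) : bool :=
  [exists x, exists y, e x y && (S == [set x; y])].

Definition perfect_matching (T : finType) (e : rel T) (M : {set {set T}}) : bool :=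
  [forall S in M, is_edge e S] && [forall v, #|[set S in M | v \in S]| == 1].

Definition num_perfect_matchings (T : finType) (e : rel T) : nat :=
  #|[set M : {set {set T}} | perfect_matching e M]|.

From mathcomp Require Import all_boot fingroup perm.
Set Implicit Arguments. Unset Strict Implicit. Unset Printing Implicit Defensive.

(* A perfect matching is the same thing as a fixed-point-free involution f
   with x ~ f x for every x.  Fix a0 in the channel C and call f a near
   matching if only the pair {a0, f a0} may fail to be an edge.  Count the
   pairs (a, f) with a in C \ {a0}, f a near matching and a ~ f a0.  For fixed
   f, the channel condition at f a0 makes their number congruent to
   [a0 ~ f a0] mod 2, so the total is congruent to m_G.  For fixed a,
   conjugating f by the transposition (a0 a) is a fixed-point-free involution
   of the admissible f, so every fibre is even. *)

Lemma card_even_fixfree_involution (U : finType) (h : U -> U) (S : {set U}) :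
  involutive h -> {in S, forall x, h x \in S} -> {in S, forall x, h x != x} ->
  ~~ odd #|S|.
Proof.
move=> hK; elim: {S}#|S|.+1 {-2}S (ltnSn #|S|) => // n IH S leSn hS hfix.
have [-> | [x xS]] := set_0Vmem S; first by rewrite cards0.
have hx_in : h x \in S :\ x by rewrite !inE hfix ?hS.
rewrite (cardsD1 x) xS (cardsD1 (h x)) hx_in /= negbK.
have inS' y : (y \in S :\ x :\ h x) = [&& y != h x, y != x & y \in S] by rewrite !inE.
apply: IH => [|y|y]; rewrite ?inS'.
- by move: leSn; rewrite (cardsD1 x) xS (cardsD1 (h x)) hx_in => /ltnW.
- case/and3P=> y_hx y_x yS; rewrite hS // (inj_eq (can_inj hK)) y_x andbT.
  by rewrite -{1}(hK x) (inj_eq (can_inj hK)).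
- by case/and3P=> _ _; apply: hfix.
Qed.

Lemma sum_nat_of_bool (U : finType) (A P : pred U) :
  \sum_(u | A u) P u = #|[set u | A u && P u]|.
Proof.
by rewrite -sum1dep_card big_mkcondr /=; apply: eq_bigr => u _; case: (P u).
Qed.

Lemma odd_sum (I : Type) (r : seq I) (P : pred I) (F : I -> nat) :
  odd (\sum_(i <- r | P i) F i) = \big[addb/false]_(i <- r | P i) odd (F i).
Proof. exact: (big_morph odd oddD). Qed.

Section PerfectMatchings.
Variables (T : finType) (e : rel T).
Hypotheses (esym : symmetric e) (eirr : irreflexive e).

Lemma edge_neq x y : e x y -> x != y.
Proof. by apply: contraTneq => ->; rewrite eirr. Qed.

Lemma is_edge_set2 x y : is_edge e [set x; y] = e x y.
Proof.
apply/existsP/idP => [[u /existsP[w /andP[euw /eqP Exy]]] | exy]; last first.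
  by exists x; apply/existsP; exists y; rewrite exy eqxx.
have degenerate z : [set z] = [set u; w] -> e x y.
  move=> Ez; have /set1P wz : w \in [set z] by rewrite Ez set22.
  have /set1P uz : u \in [set z] by rewrite Ez set21.
  by move: euw; rewrite wz uz eirr.
have /set2P[xu | xw] : x \in [set u; w] by rewrite -Exy set21.
  have /set2P[yu | ->] : y \in [set u; w] by rewrite -Exy set22.
    by apply: (degenerate u); rewrite -Exy xu yu setUid.
  by rewrite xu.
have /set2P[-> | yw] : y \in [set u; w] by rewrite -Exy set22.
  by rewrite xw esym.
by apply: (degenerate w); rewrite -Exy xw yw setUid.
Qed.

Definition matching_fun (f : {ffun T -> T}) : bool :=
  [forall x, (f (f x) == x) && e x (f x)].

Definition matching_of (f : {ffun T -> T}) : {set {set T}} :=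
  [set [set x; f x] | x : T].

Definition partner (M : {set {set T}}) (x : T) : T :=
  odflt x [pick y | [set x; y] \in M].

Lemma perfect_matching_of f : matching_fun f -> perfect_matching e (matching_of f).
Proof.
move=> /forallP fP; apply/andP; split.
  by apply/forall_inP=> _ /imsetP[x _ ->]; rewrite is_edge_set2; case/andP: (fP x).
apply/forallP=> v; apply/cards1P; exists [set v; f v]; apply/setP=> S.
rewrite !inE; apply/andP/eqP => [[/imsetP[x _ ->] /set2P[-> // | vfx]] | ->].
  by case/andP: (fP x) => /eqP fxK _; rewrite vfx fxK setUC.
by rewrite set21; split=> //; apply: imset_f.
Qed.

Section Partner.
Variable M : {set {set T}}.
Hypothesis PM : perfect_matching e M.

Lemma partner_uniq x y : [set x; y] \in M -> partner M x = y.
Proof.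
case/andP: PM => /forall_inP Medge /forallP /(_ x) /cards1P[S Sx] xyM.
rewrite /partner; case: pickP => [z xzM | /(_ y)]; last by rewrite xyM.
have inSx w : [set x; w] \in M -> [set x; w] = S.
  by move=> xwM; apply/set1P; rewrite -Sx inE xwM set21.
have /set2P[zx | //] : z \in [set x; y] by rewrite (inSx y xyM) -(inSx z xzM) set22.
by move: (Medge _ xzM); rewrite zx setUid -[[set x]]setUid is_edge_set2 eirr.
Qed.

Lemma partner_mem x : [set x; partner M x] \in M.
Proof.
case/andP: PM => /forall_inP Medge /forallP /(_ x) /cards1P[S Sx].
have /setIdP[SM xS] : S \in [set S in M | x \in S] by rewrite Sx set11.
case/existsP: (Medge _ SM) => u /existsP[w /andP[_ /eqP Suw]].
have edge_in y z : [set y; z] = S -> [set y; partner M y] \in M.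
  by move=> yzS; rewrite (partner_uniq (_ : [set y; z] \in M)) yzS.
move: xS; rewrite Suw => /set2P[-> | ->].
  exact: (edge_in _ w).
by apply: (edge_in _ u); rewrite setUC.
Qed.

Lemma partner_edge x : e x (partner M x).
Proof.
by case/andP: PM => /forall_inP /(_ _ (partner_mem x)); rewrite is_edge_set2.
Qed.

Lemma partnerK : involutive (partner M).
Proof. by move=> x; apply: partner_uniq; rewrite setUC partner_mem. Qed.
End Partner.

Lemma partner_matching_of f : matching_fun f -> partner (matching_of f) =1 f.
Proof.
move=> fM x; apply: (partner_uniq (perfect_matching_of fM)).
exact: imset_f.
Qed.

Lemma matching_of_partner M :
  perfect_matching e M -> matching_of [ffun x => partner M x] = M.
Proof.
move=> PM; apply/setP=> S; apply/imsetP/idP => [[x _ ->] | SM].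
  by rewrite ffunE partner_mem.
case/andP: PM (PM) => /forall_inP /(_ _ SM).
move=> /existsP[u /existsP[w /andP[_ /eqP Suw]]] _ PM.
by rewrite Suw in SM *; exists u; rewrite // ffunE (partner_uniq PM SM).
Qed.

Lemma card_perfect_matchings :
  num_perfect_matchings e = #|[set f | matching_fun f]|.
Proof.
rewrite /num_perfect_matchings.
have -> : [set M | perfect_matching e M] = matching_of @: [set f | matching_fun f].
  apply/setP=> M; rewrite inE; apply/idP/imsetP => [PM | [f + ->]].
    exists [ffun x => partner M x]; last by rewrite matching_of_partner.
    by rewrite inE; apply/forallP=> x; rewrite !ffunE partnerK // eqxx partner_edge.
  by rewrite inE; apply: perfect_matching_of.
apply: card_in_imset => f g; rewrite !inE => fM gM fg.
by apply/ffunP=> x; rewrite -(partner_matching_of fM) -(partner_matching_of gM) fg.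
Qed.

Definition near_matching (a0 : T) (f : {ffun T -> T}) : bool :=
  [forall x, [&& f (f x) == x, f x != x & (x != a0) ==> (f x != a0) ==> e x (f x)]].

Lemma near_matchingP a0 (f : {ffun T -> T}) :
  reflect (forall x, [/\ f (f x) = x, f x != x & x != a0 -> f x != a0 -> e x (f x)])
          (near_matching a0 f).
Proof.
apply: (iffP forallP) => fN x.
  by case/and3P: (fN x) => /eqP fxK fx_x /implyP near_x; split=> // /near_x /implyP.
case: (fN x) => fxK fx_x near_x; rewrite fxK eqxx fx_x.
by apply/implyP=> /near_x /implyP.
Qed.

Lemma matching_funE a0 (f : {ffun T -> T}) :
  matching_fun f = near_matching a0 f && e a0 (f a0).
Proof.
apply/forallP/andP => [fM | [/near_matchingP fN ea0f] x].
  split; last by case/andP: (fM a0).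
  apply/near_matchingP => x; case/andP: (fM x) => /eqP fxK exf.
  by split=> //; rewrite eq_sym edge_neq.
have [fxK _ near_x] := fN x; rewrite fxK eqxx /=.
have [-> // | x_a0] := eqVneq x a0.
have [fx_a0 | ] := eqVneq (f x) a0; last exact: near_x.
by rewrite fx_a0 -[x]fxK fx_a0 esym.
Qed.

Definition tperm_conj (x y : T) (f : {ffun T -> T}) : {ffun T -> T} :=
  [ffun z => tperm x y (f (tperm x y z))].

Lemma tperm_conjK x y : involutive (tperm_conj x y).
Proof. by move=> f; apply/ffunP=> z; rewrite !ffunE !tpermK. Qed.

Section SwapEndpoints.
Variables (a0 a : T).
Hypothesis a_neq_a0 : a != a0.

Lemma near_matching_tperm_fix f :
  near_matching a0 f -> e a (f a0) ->
  [/\ tperm a0 a (f a0) = f a0, tperm a0 a (f a) = f a & e a (f a)].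
Proof.
move=> /near_matchingP fN ea.
have [_ fa0_a0 _] := fN a0; have [faK fa_a near_a] := fN a.
have fa0_a : f a0 != a by rewrite eq_sym edge_neq.
have fa_a0 : f a != a0 by apply: contraNneq fa0_a => <-; rewrite faK.
by rewrite !tpermD 1?eq_sym //; split=> //; apply: near_a.
Qed.

Lemma near_matching_tperm_conj f :
  near_matching a0 f -> e a (f a0) ->
  near_matching a0 (tperm_conj a0 a f) && e a (tperm_conj a0 a f a0).
Proof.
move=> fN ea; have [t_fa0 t_fa ea'] := near_matching_tperm_fix fN ea.
move/near_matchingP: fN => fN.
rewrite ffunE tpermL t_fa ea' andbT; apply/near_matchingP => x.
have [fyK fy_y _] := fN (tperm a0 a x); split.
- by rewrite !ffunE tpermK fyK tpermK.
- by rewrite ffunE; apply: contra_neq fy_y => gx; rewrite -{2}gx tpermK.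
move=> x_a0; rewrite !ffunE.
have [-> _ | x_a] := eqVneq x a; first by rewrite tpermR t_fa0.
have tx : tperm a0 a x = x by rewrite tpermD // eq_sym.
have [fa0K _ _] := fN a0.
have [-> _ | x_fa0] := eqVneq x (f a0); first by rewrite t_fa0 fa0K tpermL esym.
have [fxK _ near_x] := fN x; rewrite tx.
have [-> | fx_a] := eqVneq (f x) a; first by rewrite tpermR eqxx.
have fx_a0 : f x != a0 by apply: contraNneq x_fa0 => <-; rewrite fxK.
by rewrite tpermD 1?eq_sym // => _; apply: near_x.
Qed.

Lemma tperm_conj_neq f : near_matching a0 f -> e a (f a0) -> tperm_conj a0 a f != f.
Proof.
move=> fN ea; have [_ t_fa _] := near_matching_tperm_fix fN ea.
move/near_matchingP: fN => fN; have [fa0K _ _] := fN a0; have [faK _ _] := fN a.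
apply: contra_neq a_neq_a0 => /ffunP/(_ a0); rewrite ffunE tpermL t_fa => fa_fa0.
by rewrite -faK fa_fa0 fa0K.
Qed.
End SwapEndpoints.

Section Parity.
Variables (C : {set T}) (a0 : T).
Hypotheses (chC : channel e C) (a0C : a0 \in C).

Lemma channel_edge_parity v : e a0 v = odd (\sum_(u in C | u != a0) e u v).
Proof.
have -> : \sum_(u in C | u != a0) e u v = \sum_(u in C | u != a0) e v u.
  by apply: eq_bigr => u _; rewrite esym.
have := chC v; rewrite -sum_nat_of_bool (bigD1 a0) //= oddD oddb esym.
by rewrite negb_add => /eqP.
Qed.

Lemma near_matching_at_even a :
  a != a0 -> ~~ odd #|[set f | near_matching a0 f && e a (f a0)]|.
Proof.
move=> a_a0; apply: (card_even_fixfree_involution (tperm_conjK a0 a)) => f;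
  rewrite inE => /andP[fN ea].
  by rewrite inE near_matching_tperm_conj.
exact: tperm_conj_neq.
Qed.

Lemma matching_funs_even : ~~ odd #|[set f | matching_fun f]|.
Proof.
have near_sum :
    #|[set f | matching_fun f]| = \sum_(f | near_matching a0 f) e a0 (f a0).
  by rewrite sum_nat_of_bool; apply: eq_card => f; rewrite !inE (matching_funE a0).
have double_count :
    \sum_(f | near_matching a0 f) \sum_(a in C | a != a0) e a (f a0)
    = \sum_(a in C | a != a0) #|[set f | near_matching a0 f && e a (f a0)]|.
  by rewrite exchange_big; apply: eq_bigr => a _; rewrite sum_nat_of_bool.
rewrite near_sum odd_sum.
under eq_bigr => f _ do rewrite oddb channel_edge_parity.
rewrite -odd_sum double_count odd_sum big1 // => a /andP[_ a_a0].
exact/negbTE/near_matching_at_even.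
Qed.
End Parity.
End PerfectMatchings.

Theorem corollary5p3 (T : finType) (e : rel T) :
  simple_graph e -> bipartite e ->
  (exists C : {set T}, C != set0 /\ channel e C) ->
  ~~ odd (num_perfect_matchings e).
Proof.
move=> [esym eirr] _ [C [C_neq0 chC]].
have [C0 | [a0 a0C]] := set_0Vmem C; first by rewrite C0 eqxx in C_neq0.
by rewrite card_perfect_matchings //; apply: matching_funs_even chC a0C.
Qed.
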